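(* Let $\mathcal S$ be the stabilizer group of an $n$-qubit stabilizer code ($-I\notin\mathcal S$), generated by independent commuting Pauli operators $S_1,\dots,S_r$, and for $x\in\mathbb F_2^r$ let $\Pi_x=\prod_{i=1}^r\frac12(I+(-1)^{x_i}S_i)$. Let $\mathcal M(\sigma)=\sum_{x\in\mathbb F_2^r}|x\rangle\langle x|\otimes\Pi_x\sigma\Pi_x$. Let $B\subseteq[n]$ be recoverable, i.e. every Pauli operator supported on $B$ that commutes with all $S_i$ equals $\lambda S$ for some $S\in\mathcal S$ and $\lambda\in\{\pm1,\pm i\}$. Let $\mathcal E_B$ be a linear superoperator on $n$ qubits acting as the identity on the qubits outside $B$, and let $\rho$ be a density operator with $\Pi_0\rho\Pi_0=\rho$. Then there exist complex numbers $\alpha_x$ and Pauli operators $E_x$ supported on $B$ ($x\in\mathbb F_2^r$) such that $$\mathcal M(\mathcal E_B(\rho))=\sum_{x\in\mathbb F_2^r}\alpha_x\,|x\rangle\langle x|\otimes E_x\rho E_x.$$ If $\mathcal E_B$ is trace preserving, then $\sum_x\alpha_x=1$.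
   Context: Pauli operators are tensor products of $I,X,Y,Z$ with phases; a superoperator acts as the identity outside $B$ if it has the form $\mathcal I_{[n]\setminus B}\otimes\mathcal E$. *)

From HB Require Import structures.
From mathcomp Require Import all_boot all_order all_algebra.
From mathcomp Require Import reals.
From mathcomp.real_closed Require Export complex mxtens.
Set Implicit Arguments. Unset Strict Implicit. Unset Printing Implicit Defensive.
Import Order.TTheory GRing.Theory Num.Theory.
Local Open Scope ring_scope.

Section Qubits.
Variable R : realType.
Local Notation C := (R[i]).

(* k-th bit of the binary expansion of an index (little endian): the
   computational basis vector |i> of n qubits has qubit k in state bit i k. *)
Definition bit {m : nat} (i : 'I_m) (k : nat) : bool := odd (i %/ 2 ^ k).

Inductive pauli1 := PI | PX | PY | PZ.

Definition sigma (s : pauli1) (a b : bool) : C :=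
  match s with
  | PI => (a == b)%:R
  | PX => (a != b)%:R
  | PY => if a == b then 0 else if a then 'i else - 'i
  | PZ => if a == b then (if a then -1 else 1) else 0
  end.

(* the tensor product  sigma_{p 0} (x) ... (x) sigma_{p (n-1)} *)
Definition pauli_string (n : nat) (p : 'I_n -> pauli1) : 'M[C]_(2 ^ n) :=
  \matrix_(i, j) \prod_(k < n) sigma (p k) (bit i k) (bit j k).

(* Pauli operators: phase in {1,-1,i,-i} (i.e. c^4 = 1) times a Pauli string *)
Definition is_pauli (n : nat) (P : 'M[C]_(2 ^ n)) : Prop :=
  exists (c : C) (p : 'I_n -> pauli1), c ^+ 4 = 1 /\ P = c *: pauli_string p.

Definition pauli_supported_on (n : nat) (B : {set 'I_n}) (P : 'M[C]_(2 ^ n)) : Prop :=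
  exists (c : C) (p : 'I_n -> pauli1),
    c ^+ 4 = 1 /\ (forall k, k \notin B -> p k = PI) /\ P = c *: pauli_string p.

Inductive gen_group (n : nat) (G : 'M[C]_(2 ^ n) -> Prop) : 'M[C]_(2 ^ n) -> Prop :=
  | gen_one : gen_group G 1%:M
  | gen_gen M : G M -> gen_group G M
  | gen_mul M N : gen_group G M -> gen_group G N -> gen_group G (M *m N)
  | gen_inv M : gen_group G M -> M \in unitmx -> gen_group G (invmx M).

Definition stab_group (n r : nat) (S : 'I_r -> 'M[C]_(2 ^ n)) : 'M[C]_(2 ^ n) -> Prop :=
  gen_group (fun M => exists i, M = S i).

Definition stabilizer_generators (n r : nat) (S : 'I_r -> 'M[C]_(2 ^ n)) : Prop :=
  [/\ forall i, is_pauli (S i),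
      forall i j, S i *m S j = S j *m S i,
      forall i, ~ gen_group (fun M => exists j, j != i /\ M = S j) (S i)
    & ~ stab_group S (- 1%:M)].

Definition syn_proj (n r : nat) (S : 'I_r -> 'M[C]_(2 ^ n)) (y : 'I_r -> bool)
  : 'M[C]_(2 ^ n) :=
  \big[mulmx/1%:M]_(i < r) (2^-1 *: (1%:M + ((-1) ^+ y i) *: S i)).

(* Pi_x for x in F_2^r, encoded as the basis index x : 'I_(2^r) *)
Definition Pi (n r : nat) (S : 'I_r -> 'M[C]_(2 ^ n)) (x : 'I_(2 ^ r)) : 'M[C]_(2 ^ n) :=
  syn_proj S (fun i => bit x i).

Definition meas (n r : nat) (S : 'I_r -> 'M[C]_(2 ^ n)) (s : 'M[C]_(2 ^ n))
  : 'M[C]_(2 ^ r * 2 ^ n) :=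
  \sum_(x < 2 ^ r) (delta_mx x x *t (Pi S x *m s *m Pi S x)).

Definition recoverable (n r : nat) (S : 'I_r -> 'M[C]_(2 ^ n)) (B : {set 'I_n}) : Prop :=
  forall P, pauli_supported_on B P -> (forall i, P *m S i = S i *m P) ->
    exists (lam : C) (M : 'M[C]_(2 ^ n)), lam ^+ 4 = 1 /\ stab_group S M /\ P = lam *: M.

Definition agree_out (n : nat) (B : {set 'I_n}) (i k : 'I_(2 ^ n)) : bool :=
  [forall q : 'I_n, (q \notin B) ==> (bit i q == bit k q)].
Definition agree_in (n : nat) (B : {set 'I_n}) (i k : 'I_(2 ^ n)) : bool :=
  [forall q : 'I_n, (q \in B) ==> (bit i q == bit k q)].

(* F = I_{[n]\B} (x) E for a linear superoperator E on the qubits of B,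
   where E(|b><b'|) = sum_{c,c'} K b b' c c' |c><c'| (b,b',c,c' bit strings on B). *)
Definition acts_as_id_outside (n : nat) (B : {set 'I_n})
    (F : 'M[C]_(2 ^ n) -> 'M[C]_(2 ^ n)) : Prop :=
  exists K : 'I_(2 ^ n) -> 'I_(2 ^ n) -> 'I_(2 ^ n) -> 'I_(2 ^ n) -> C,
    (forall i j k l i' j' k' l', agree_in B i i' -> agree_in B j j' ->
        agree_in B k k' -> agree_in B l l' -> K i j k l = K i' j' k' l') /\
    (forall M, F M = \matrix_(k, l) \sum_(i < 2 ^ n) \sum_(j < 2 ^ n)
        ((agree_out B i k && agree_out B j l)%:R * K i j k l * M i j)).

Definition density (n : nat) (rho : 'M[C]_(2 ^ n)) : Prop :=
  (forall v : 'cV[C]_(2 ^ n), 0 <= ((map_mx (fun z => z^*) v)^T *m rho *m v) ord0 ord0)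
  /\ \tr rho = 1.

End Qubits.

From HB Require Import structures.
From mathcomp Require Import all_boot all_order all_algebra.
From mathcomp Require Import reals.
From mathcomp.real_closed Require Import complex mxtens.
From mathcomp.algebra_tactics Require Import ring.
Set Implicit Arguments. Unset Strict Implicit. Unset Printing Implicit Defensive.
Import GRing.Theory Num.Theory.
Local Open Scope ring_scope.

(* Expand E_B in the Pauli basis of the qubits of B: E_B(s) = sum c_PQ P s Q over
   Pauli strings P, Q supported on B.  As rho = Pi_0 rho Pi_0 and P Pi_0 = Pi_x P when
   x is the syndrome of P, the syndrome projection Pi_x keeps exactly the terms whose
   P and Q both have syndrome x.  If E_x is one Pauli string on B of syndrome x, then
   E_x P commutes with every generator and is supported on B, so recoverability makes
   it a phase times a stabilizer, which fixes rho; hence every surviving term is a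
   multiple of E_x rho E_x.  For the trace, tr (P rho Q) = 0 unless P and Q have the
   same syndrome, so the traces of the blocks add up to tr E_B(rho) = tr rho = 1,
   while tr (E_x rho E_x) = 1. *)

(** * Computational basis indices *)

Lemma binary_digits_inj n a b : (a < 2 ^ n)%N -> (b < 2 ^ n)%N ->
  (forall t, (t < n)%N -> odd (a %/ 2 ^ t) = odd (b %/ 2 ^ t)) -> a = b.
Proof.
elim: n a b => [|n IH] a b.
  by rewrite expn0 !ltnS !leqn0 => /eqP -> /eqP ->.
move=> ha hb h.
have h0 := h 0%N isT; rewrite expn0 !divn1 in h0.
have half_eq : (a %/ 2 = b %/ 2)%N.
  apply: IH => [||t ht]; rewrite ?ltn_divLR // -?expnSr //.
  by rewrite -!divnMA -expnS; exact: h.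
by rewrite -(odd_double_half a) -(odd_double_half b) h0 -!divn2 half_eq.
Qed.

Lemma prodr_nat_forall (R : comPzSemiRingType) (I : finType) (b : I -> bool) :
  \prod_(t : I) ((b t)%:R : R) = ([forall t, b t])%:R.
Proof.
case: (boolP [forall t, b t]) => [/forallP h|/forallPn [t /negbTE ht]].
  by apply: big1 => t _; rewrite h.
by rewrite (bigD1 t) //= ht mul0r.
Qed.

Section BitStrings.
Variable n : nat.
Local Notation bitstring := {ffun 'I_n -> bool}.

Definition bits (i : 'I_(2 ^ n)) : bitstring := [ffun t : 'I_n => bit i t].

Lemma bits_inj : injective bits.
Proof.
move=> i j /ffunP eq_ij; apply: val_inj.
apply: (@binary_digits_inj n) => [||t ht]; rewrite ?ltn_ord //.
by have := eq_ij (Ordinal ht); rewrite !ffunE.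
Qed.

Lemma bits_bij : bijective bits.
Proof.
apply: inj_card_bij; first exact: bits_inj.
by rewrite card_ffun !card_ord card_bool.
Qed.

Lemma exp2_gt0 : (0 < 2 ^ n)%N. Proof. by rewrite expn_gt0. Qed.

Definition index_of_bits (f : bitstring) : 'I_(2 ^ n) :=
  odflt (Ordinal exp2_gt0) [pick i | bits i == f].

Lemma index_of_bitsK : cancel index_of_bits bits.
Proof.
move=> f; rewrite /index_of_bits; case: pickP => [i /eqP //|no_preimage].
have [g _ gK] := bits_bij.
by have := no_preimage (g f); rewrite gK eqxx.
Qed.

Lemma bitsK : cancel bits index_of_bits.
Proof. by move=> i; apply: bits_inj; rewrite index_of_bitsK. Qed.

Lemma bit_index_of_bits f (t : 'I_n) : bit (index_of_bits f) t = f t.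
Proof. by rewrite -{2}(index_of_bitsK f) ffunE. Qed.

Lemma eq_bits (i j : 'I_(2 ^ n)) : [forall t : 'I_n, bit i t == bit j t] = (i == j).
Proof.
apply/forallP/eqP => [h|-> t //]; apply: bits_inj; apply/ffunP => t.
by rewrite !ffunE; exact/eqP.
Qed.

Lemma sum_prod_bits (V : comPzSemiRingType) (h : 'I_n -> bool -> V) :
  \sum_(k < 2 ^ n) \prod_(t < n) h t (bit k t) = \prod_(t < n) \sum_(b : bool) h t b.
Proof.
rewrite bigA_distr_bigA /= (reindex bits) /=; last first.
  by exists index_of_bits => f _; [rewrite bitsK | rewrite index_of_bitsK].
by apply: eq_bigr => k _; apply: eq_bigr => t _; rewrite ffunE.
Qed.

End BitStrings.

Section QubitTensor.
Variables (R : comPzSemiRingType) (n : nat).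

Definition qubit_tensor (f : 'I_n -> bool -> bool -> R) : 'M[R]_(2 ^ n) :=
  \matrix_(i, j) \prod_(t < n) f t (bit i t) (bit j t).

Lemma mul_qubit_tensor f g : qubit_tensor f *m qubit_tensor g =
  qubit_tensor (fun t a b => \sum_(c : bool) f t a c * g t c b).
Proof.
apply/matrixP => i j; rewrite !mxE.
under eq_bigr do rewrite !mxE -big_split /=.
by rewrite (sum_prod_bits (fun t c => f t (bit i t) c * g t c (bit j t))).
Qed.

Lemma qubit_tensor_delta : qubit_tensor (fun _ a b => (a == b)%:R) = 1%:M.
Proof.
apply/matrixP => i j; rewrite !mxE prodr_nat_forall.
by congr (nat_of_bool _)%:R; exact: eq_bits.
Qed.

End QubitTensor.

(** * Pauli strings *)

Definition pauli1_xz (s : pauli1) : bool * bool :=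
  match s with
  | PI => (false, false) | PX => (true, false) | PY => (true, true) | PZ => (false, true)
  end.

Definition pauli1_of_xz (b : bool * bool) : pauli1 :=
  match b with
  | (false, false) => PI | (true, false) => PX | (true, true) => PY | (false, true) => PZ
  end.

Lemma pauli1_xzK : cancel pauli1_xz pauli1_of_xz. Proof. by case. Qed.
HB.instance Definition _ := Finite.copy pauli1 (can_type pauli1_xzK).

Definition pauli1_mul (a c : pauli1) : pauli1 :=
  match a, c with
  | PI, _ => c | _, PI => a
  | PX, PX | PY, PY | PZ, PZ => PI
  | PX, PY | PY, PX => PZ
  | PY, PZ | PZ, PY => PX
  | PZ, PX | PX, PZ => PY
  end.

Definition anticommute1 (a c : pauli1) : bool := [&& a != PI, c != PI & a != c].

Section PauliAlgebra.
Variable R : realType.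
Local Notation C := (R[i]).
Local Notation PS := (pauli_string R).

Definition pauli1_phase (a c : pauli1) : C :=
  match a, c with
  | PX, PY | PY, PZ | PZ, PX => 'i
  | PY, PX | PZ, PY | PX, PZ => - 'i
  | _, _ => 1
  end.

Lemma sigma_mul a c x y :
  \sum_(b : bool) sigma R a x b * sigma R c b y = pauli1_phase a c * sigma R (pauli1_mul a c) x y.
Proof.
by case: a; case: c; case: x; case: y; rewrite big_bool /=;
  rewrite ?(mulr0, mul0r, mulr1, mul1r, add0r, addr0, mulrN, mulNr, opprK, mulCii).
Qed.

Lemma pauli1_phase_comm a c :
  pauli1_phase a c = (-1) ^+ anticommute1 a c * pauli1_phase c a.
Proof. by case: a; case: c; rewrite /= ?mul1r ?mulN1r ?opprK. Qed.

Lemma pauli1_phase4 a c : pauli1_phase a c ^+ 4 = 1.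
Proof.
have i4 : 'i ^+ 4 = 1 :> C by rewrite (exprM _ 2 2) sqrCi sqrrN expr1n.
have Ni4 : (- 'i) ^+ 4 = 1 :> C by rewrite (exprM _ 2 2) sqrrN sqrCi sqrrN expr1n.
by case: a; case: c; rewrite /= ?expr1n.
Qed.

Lemma pauli_stringE n (p : 'I_n -> pauli1) : PS p = qubit_tensor (fun t => sigma R (p t)).
Proof. by []. Qed.

Lemma eq_pauli_string n (p q : 'I_n -> pauli1) : p =1 q -> PS p = PS q.
Proof. by move=> pq; apply/matrixP => i j; rewrite !mxE; apply: eq_bigr => t _; rewrite pq. Qed.

Lemma pauli_string_mul n (p q : 'I_n -> pauli1) :
  PS p *m PS q = (\prod_t pauli1_phase (p t) (q t)) *: PS (fun t => pauli1_mul (p t) (q t)).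
Proof.
rewrite !pauli_stringE mul_qubit_tensor; apply/matrixP => i j; rewrite !mxE -big_split.
by apply: eq_bigr => t _; exact: sigma_mul.
Qed.

Lemma pauli_string_id n : PS (fun _ : 'I_n => PI) = 1%:M.
Proof. by rewrite -(qubit_tensor_delta C n). Qed.

Lemma pauli_string_sq n (p : 'I_n -> pauli1) : PS p *m PS p = 1%:M.
Proof.
rewrite pauli_string_mul big1 => [|t _]; last by case: (p t).
by rewrite scale1r -(pauli_string_id n); apply: eq_pauli_string => t; case: (p t).
Qed.

Lemma pauli_string_comm n (p q : 'I_n -> pauli1) :
  PS p *m PS q = (-1) ^+ (\sum_t anticommute1 (p t) (q t)) *: (PS q *m PS p).
Proof.
rewrite !pauli_string_mul scalerA -prodrXr -big_split /=.
rewrite (@eq_pauli_string _ _ (fun t => pauli1_mul (q t) (p t))) => [|t]; last first.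
  by case: (p t); case: (q t).
by congr (_ *: _); apply: eq_bigr => t _; rewrite pauli1_phase_comm.
Qed.

Lemma mxtrace_pauli_conj n (p : 'I_n -> pauli1) (M : 'M[C]_(2 ^ n)) :
  \tr (PS p *m M *m PS p) = \tr M.
Proof. by rewrite mxtrace_mulC mulmxA pauli_string_sq mul1mx. Qed.

End PauliAlgebra.

(** * Pauli expansion of superoperators acting on B *)

Definition supported_in n (B : {set 'I_n}) (p : 'I_n -> pauli1) : bool :=
  [forall k, (k \notin B) ==> (p k == PI)].

Section PauliExpansion.
Variable R : realType.
Local Notation C := (R[i]).
Local Notation PS := (pauli_string R).

Lemma sum_pauli1 (f : pauli1 -> C) : \sum_s f s = f PI + f PX + f PY + f PZ.
Proof.
rewrite (reindex pauli1_of_xz) /=; last first.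
  by exists pauli1_xz => s _; [case: s => [[] []] | rewrite pauli1_xzK].
rewrite (eq_bigr (fun b => f (pauli1_of_xz (b.1, b.2)))) => [|[] //].
rewrite -(pair_bigA _ (fun x z => f (pauli1_of_xz (x, z)))) /= !big_bool /=.
by move: (f PI) (f PX) (f PY) (f PZ) => a b c d; ring.
Qed.

Definition pauli_coef (g : bool -> bool -> C) (s : pauli1) : C :=
  2^-1 * \sum_(u : bool) \sum_(v : bool) sigma R s v u * g u v.

Lemma pauli1_completeness u v x y :
  \sum_s sigma R s v u * sigma R s x y = 2 * ((x == u) && (y == v))%:R.
Proof.
rewrite sum_pauli1; case: u; case: v; case: x; case: y => /=;
  rewrite ?(mulr0, mul0r, mulr1, mul1r, add0r, addr0, mulrN, mulNr, opprK, mulCii);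
  ring.
Qed.

Lemma pauli1_expansion g x y : g x y = \sum_s pauli_coef g s * sigma R s x y.
Proof.
have coefE s : pauli_coef g s * sigma R s x y =
    2^-1 * \sum_u \sum_v g u v * (sigma R s v u * sigma R s x y).
  rewrite -mulrA mulr_suml; congr (_ * _); apply: eq_bigr => u _.
  by rewrite mulr_suml; apply: eq_bigr => v _; ring.
under eq_bigr do rewrite coefE.
rewrite -mulr_sumr exchange_big; under eq_bigr do rewrite exchange_big.
under eq_bigr do under eq_bigr do rewrite -mulr_sumr pauli1_completeness.
by clear coefE; rewrite !big_bool; case: x; case: y => /=; field.
Qed.

Lemma pauli_coef_scalar g c s : (forall x y, g x y = c * (x == y)%:R) ->
  s != PI -> pauli_coef g s = 0.
Proof.
move=> gE; rewrite /pauli_coef; under eq_bigr do under eq_bigr do rewrite gE.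
by case: s => // _; rewrite !big_bool /=;
  rewrite ?(mulr0, mul0r, mulr1, mul1r, add0r, addr0, mulrN, mulNr, subrr, addNr, oppr0).
Qed.

Lemma qubit_tensor_pauli_expansion n (f : 'I_n -> bool -> bool -> C) :
  qubit_tensor f = \sum_(p : {ffun 'I_n -> pauli1}) (\prod_t pauli_coef (f t) (p t)) *: PS p.
Proof.
apply/matrixP => i j; rewrite summxE !mxE.
under eq_bigr do rewrite pauli1_expansion.
rewrite bigA_distr_bigA /=; apply: eq_bigr => p _.
by rewrite !mxE -big_split.
Qed.

Lemma qubit_tensor_local_expansion n (B : {set 'I_n}) (f : 'I_n -> bool -> bool -> C) :
  (forall t, t \notin B -> exists c, forall x y, f t x y = c * (x == y)%:R) ->
  qubit_tensor f =
    \sum_(p : {ffun 'I_n -> pauli1} | supported_in B p)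
      (\prod_t pauli_coef (f t) (p t)) *: PS p.
Proof.
move=> f_id; rewrite qubit_tensor_pauli_expansion [RHS]big_mkcond /=; apply: eq_bigr => p _.
case: ifP => // /forallPn [k]; rewrite negb_imply => /andP [kB pk].
have [c fc] := f_id k kB.
by rewrite (bigD1 k) //= (pauli_coef_scalar fc pk) mul0r scale0r.
Qed.

End PauliExpansion.

Section LocalSuperoperator.
Variables (R : realType) (n : nat) (B : {set 'I_n}).
Local Notation C := (R[i]).
Local Notation PS := (pauli_string R).
Local Notation bitstring := {ffun 'I_n -> bool}.

Definition bits_in (k : 'I_(2 ^ n)) : bitstring := [ffun t => (t \in B) && bit k t].

(* The factors of |a><b| on the qubits of B tensored with the identity on the
   other qubits; a and b must vanish off B, so that each such operator has a
   unique label. *)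
Definition unit_in_factor (a b : bitstring) (t : 'I_n) (x y : bool) : C :=
  if t \in B then ((x == a t) && (y == b t))%:R else ((x == y) && ~~ a t && ~~ b t)%:R.

Definition unit_in (a b : bitstring) : 'M[C]_(2 ^ n) := qubit_tensor (unit_in_factor a b).

Lemma unit_in_entry a b k i :
  unit_in a b k i = [&& agree_out B i k, a == bits_in k & b == bits_in i]%:R.
Proof.
rewrite /unit_in /qubit_tensor mxE /unit_in_factor.
rewrite (eq_bigr (fun t => (if t \in B then (bit k t == a t) && (bit i t == b t)
  else (bit i t == bit k t) && ~~ a t && ~~ b t)%:R)) => [|t _]; last first.
  by case: (t \in B) => //; rewrite [bit i t == _]eq_sym.
rewrite prodr_nat_forall; congr (nat_of_bool _)%:R; apply/forallP/and3P.
  move=> h; split.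
  - apply/forallP => t; apply/implyP => /negbTE tB.
    by have := h t; rewrite tB => /andP [/andP []].
  - apply/eqP/ffunP => t; rewrite ffunE; have := h t.
    by case: (t \in B) => /=; [case/andP => /eqP <- | case/andP => /andP [_ /negbTE ->]].
  - apply/eqP/ffunP => t; rewrite ffunE; have := h t.
    by case: (t \in B) => /=; [case/andP => _ /eqP <- | case/andP => _ /negbTE ->].
case=> /forallP out_ik /eqP -> /eqP -> t; rewrite !ffunE.
case: (boolP (t \in B)) => tB /=; first by rewrite !eqxx.
by rewrite (implyP (out_ik t) tB).
Qed.

Lemma unit_in_pauli_expansion a b :
  unit_in a b = \sum_(p : {ffun 'I_n -> pauli1} | supported_in B p)
    (\prod_t pauli_coef (unit_in_factor a b t) (p t)) *: PS p.
Proof.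
apply: qubit_tensor_local_expansion => t tB.
exists (~~ a t && ~~ b t)%:R => x y; rewrite /unit_in_factor (negbTE tB).
by case: (x == y); case: (a t); case: (b t); rewrite /= ?mulr1 ?mulr0.
Qed.

Variable K : 'I_(2 ^ n) -> 'I_(2 ^ n) -> 'I_(2 ^ n) -> 'I_(2 ^ n) -> C.
Hypothesis K_local : forall i j k l i' j' k' l', agree_in B i i' -> agree_in B j j' ->
  agree_in B k k' -> agree_in B l l' -> K i j k l = K i' j' k' l'.

Definition kernel_coef (u : (bitstring * bitstring) * (bitstring * bitstring)) : C :=
  K (index_of_bits u.1.2) (index_of_bits u.2.1) (index_of_bits u.1.1) (index_of_bits u.2.2).

Lemma agree_in_bits_in i : agree_in B (index_of_bits (bits_in i)) i.
Proof. by apply/forallP => q; apply/implyP => qB; rewrite bit_index_of_bits ffunE qB. Qed.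

Lemma kernel_unit_in_sum k i j l :
  \sum_u kernel_coef u * unit_in u.1.1 u.1.2 k i * unit_in u.2.1 u.2.2 j l =
  (agree_out B i k && agree_out B j l)%:R * K i j k l.
Proof.
rewrite (bigD1 ((bits_in k, bits_in i), (bits_in j, bits_in l))) //=.
rewrite big1 => [|[[a b] [c d]] /=]; last first.
  rewrite !unit_in_entry !xpair_eqE.
  by case: (a == _); case: (b == _); case: (c == _); case: (d == _);
    rewrite /= ?andbF ?mulr0 ?mul0r.
rewrite !unit_in_entry !eqxx !andbT addr0 /kernel_coef /=.
rewrite (K_local (agree_in_bits_in i) (agree_in_bits_in j) (agree_in_bits_in k)
  (agree_in_bits_in l)).
have -> : agree_out B l j = agree_out B j l by apply: eq_forallb => q; rewrite eq_sym.
by rewrite -mulnb natrM; ring.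
Qed.

Variable F : 'M[C]_(2 ^ n) -> 'M[C]_(2 ^ n).
Hypothesis F_kernel : forall M, F M = \matrix_(k, l) \sum_(i < 2 ^ n) \sum_(j < 2 ^ n)
  ((agree_out B i k && agree_out B j l)%:R * K i j k l * M i j).

Lemma superop_unit_expansion M :
  F M = \sum_u kernel_coef u *: (unit_in u.1.1 u.1.2 *m M *m unit_in u.2.1 u.2.2).
Proof.
rewrite F_kernel; apply/matrixP => k l; rewrite !mxE summxE.
under eq_bigr do under eq_bigr do rewrite -kernel_unit_in_sum mulr_suml.
under eq_bigr do rewrite exchange_big.
rewrite exchange_big; apply: eq_bigr => u _.
rewrite !mxE mulr_sumr; under [RHS]eq_bigr do rewrite !mxE mulr_suml mulr_sumr.
rewrite exchange_big; apply: eq_bigr => i _; apply: eq_bigr => j _.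
by rewrite !mxE; ring.
Qed.

End LocalSuperoperator.

Lemma superop_pauli_expansion (R : realType) n (B : {set 'I_n})
    (F : 'M[R[i]]_(2 ^ n) -> 'M[R[i]]_(2 ^ n)) :
  acts_as_id_outside B F ->
  exists c : {ffun 'I_n -> pauli1} -> {ffun 'I_n -> pauli1} -> R[i],
  forall M, F M = \sum_(p : {ffun 'I_n -> pauli1} | supported_in B p)
    \sum_(q : {ffun 'I_n -> pauli1} | supported_in B q)
      c p q *: (pauli_string R p *m M *m pauli_string R q).
Proof.
case=> K [K_local F_kernel].
pose coef a b (p : {ffun 'I_n -> pauli1}) :=
  \prod_t pauli_coef (unit_in_factor R B a b t) (p t).
exists (fun p q => \sum_u kernel_coef K u * (coef u.1.1 u.1.2 p * coef u.2.1 u.2.2 q)).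
move=> M; rewrite (superop_unit_expansion K_local F_kernel).
under eq_bigr do rewrite !unit_in_pauli_expansion !mulmx_suml scaler_sumr.
rewrite exchange_big; apply: eq_bigr => p _.
under eq_bigr do rewrite mulmx_sumr scaler_sumr.
rewrite exchange_big; apply: eq_bigr => q _.
rewrite scaler_suml; apply: eq_bigr => u _.
by rewrite -!scalemxAl -scalemxAr !scalerA mulrA.
Qed.

(** * Syndrome projectors *)

Section OrderedMatrixProducts.
Variables (R : comPzRingType) (m : nat) (I : Type).
Implicit Types (s : seq I) (f g : I -> 'M[R]_m) (A : 'M[R]_m).

Lemma mulmx_big_comm s f g A : (forall i, A *m f i = g i *m A) ->
  A *m \big[mulmx/1%:M]_(i <- s) f i = \big[mulmx/1%:M]_(i <- s) g i *m A.
Proof.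
move=> Afg; elim: s => [|a s IH]; first by rewrite !big_nil mulmx1 mul1mx.
by rewrite !big_cons mulmxA Afg -mulmxA IH mulmxA.
Qed.

Lemma big_mulmx_commuting s f g : (forall i j, f i *m g j = g j *m f i) ->
  (\big[mulmx/1%:M]_(i <- s) f i) *m (\big[mulmx/1%:M]_(i <- s) g i) =
  \big[mulmx/1%:M]_(i <- s) (f i *m g i).
Proof.
move=> fg; elim: s => [|a s IH]; first by rewrite !big_nil mulmx1.
rewrite !big_cons -IH -!mulmxA; congr (_ *m _); rewrite !mulmxA; congr (_ *m _).
by rewrite (mulmx_big_comm _ (fun i => esym (fg i a))).
Qed.

Lemma big_mulmx_scale s (a : I -> R) f :
  \big[mulmx/1%:M]_(i <- s) (a i *: f i) = (\prod_(i <- s) a i) *: \big[mulmx/1%:M]_(i <- s) f i.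
Proof.
elim: s => [|b s IH]; first by rewrite !big_nil scale1r.
by rewrite !big_cons IH -scalemxAl -scalemxAr scalerA.
Qed.

End OrderedMatrixProducts.

Lemma mulmx_big_absorb (R : comPzRingType) m (I : eqType) (s : seq I)
    (f : I -> 'M[R]_m) (A : 'M[R]_m) j :
  j \in s -> (forall i, A *m f i = f i *m A) -> A *m f j = f j ->
  A *m \big[mulmx/1%:M]_(i <- s) f i = \big[mulmx/1%:M]_(i <- s) f i.
Proof.
move=> js Af Afj; elim: s js => [//|a s IH]; rewrite inE big_cons mulmxA.
case: eqP => [<- _|_ /= js]; first by rewrite Afj.
by rewrite Af -mulmxA IH.
Qed.

Lemma tensmxZr (R : comPzRingType) m1 n1 m2 n2 (A : 'M[R]_(m1, n1)) (a : R)
    (M : 'M[R]_(m2, n2)) : A *t (a *: M) = a *: (A *t M).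
Proof. by apply/matrixP => i j; rewrite !mxE mulrCA. Qed.

Lemma sum_multiples (R : pzSemiRingType) (V : lSemiModType R) (I : Type) (s : seq I)
    (P : pred I) (f : I -> V) (v : V) :
  (forall i, P i -> exists a, f i = a *: v) -> exists a, \sum_(i <- s | P i) f i = a *: v.
Proof.
move=> f_mult; apply: (big_ind (fun w => exists a, w = a *: v)) => //.
- by exists 0; rewrite scale0r.
- by move=> _ _ [a ->] [b ->]; exists (a + b); rewrite scalerDl.
Qed.

Section StabilizerGenerators.
Variables (R : realType) (n r : nat) (S : 'I_r -> 'M[R[i]]_(2 ^ n)).
Hypothesis S_gen : stabilizer_generators S.
Local Notation C := (R[i]).
Local Notation PS := (pauli_string R).

Lemma stab_gen_pauli j : exists (c : C) (p : 'I_n -> pauli1), c ^+ 4 = 1 /\ S j = c *: PS p.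
Proof. by case: S_gen => pauliS _ _ _; exact: pauliS. Qed.

Lemma stab_gen_comm j k : S j *m S k = S k *m S j.
Proof. by case: S_gen. Qed.

(* [c ^+ 2 = -1] would put [-1 = S j *m S j] into the stabilizer group. *)
Lemma stab_gen_sq j : S j *m S j = 1%:M.
Proof.
have [c [p [c4 Sj]]] := stab_gen_pauli j.
have Sj_sq : S j *m S j = c ^+ 2 *: 1%:M.
  by rewrite Sj -scalemxAl -scalemxAr pauli_string_sq scalerA -expr2.
have /eqP : (c ^+ 2) ^+ 2 = 1 by rewrite -exprM.
rewrite sqrf_eq1; case/orP => /eqP c2; first by rewrite Sj_sq c2 scale1r.
case: S_gen => _ _ _ []; rewrite -scaleN1r -c2 -Sj_sq.
by apply: gen_mul; apply: gen_gen; exists j.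
Qed.

Definition syndrome_bit (p : 'I_n -> pauli1) (j : 'I_r) : bool := PS p *m S j != S j *m PS p.

Lemma pauli_string_mul_gen p j : PS p *m S j = (-1) ^+ syndrome_bit p j *: (S j *m PS p).
Proof.
have [c [s [_ Sj]]] := stab_gen_pauli j.
have comm_sign : PS p *m S j = (-1) ^+ odd (\sum_t anticommute1 (p t) (s t)) *: (S j *m PS p).
  by rewrite Sj -scalemxAr pauli_string_comm signr_odd -scalemxAl !scalerA mulrC.
rewrite /syndrome_bit; case: eqP => [->|ne]; first by rewrite scale1r.
by move: comm_sign; case: odd => // /[!scale1r].
Qed.

Definition syn_factor (y : 'I_r -> bool) (j : 'I_r) : 'M[C]_(2 ^ n) :=
  2^-1 *: (1%:M + (-1) ^+ y j *: S j).

Lemma syn_projE y : syn_proj S y = \big[mulmx/1%:M]_(j < r) syn_factor y j.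
Proof. by []. Qed.

Lemma eq_syn_proj y y' : y =1 y' -> syn_proj S y = syn_proj S y'.
Proof. by move=> yy'; apply: eq_bigr => j _; rewrite yy'. Qed.

Lemma pauli_string_mul_syn_factor p y j :
  PS p *m syn_factor y j = syn_factor (fun k => y k (+) syndrome_bit p k) j *m PS p.
Proof.
rewrite /syn_factor -scalemxAl -scalemxAr mulmxDr mulmxDl mulmx1 mul1mx.
by rewrite -scalemxAr pauli_string_mul_gen scalerA -signr_addb -scalemxAl.
Qed.

Lemma pauli_string_mul_syn_proj p y :
  PS p *m syn_proj S y = syn_proj S (fun k => y k (+) syndrome_bit p k) *m PS p.
Proof. exact/mulmx_big_comm/pauli_string_mul_syn_factor. Qed.

Lemma gen_mul_syn_factor j y k : S j *m syn_factor y k = syn_factor y k *m S j.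
Proof.
rewrite /syn_factor -scalemxAl -scalemxAr mulmxDl mulmxDr mul1mx mulmx1.
by rewrite -scalemxAl -scalemxAr stab_gen_comm.
Qed.

Lemma syn_factor_comm y y' j k :
  syn_factor y j *m syn_factor y' k = syn_factor y' k *m syn_factor y j.
Proof.
have affine_comm (a b : C) (A X : 'M[C]_(2 ^ n)) : A *m X = X *m A ->
    (a *: (1%:M + b *: A)) *m X = X *m (a *: (1%:M + b *: A)).
  move=> AX; rewrite -scalemxAl -scalemxAr mulmxDl mulmxDr mul1mx mulmx1.
  by rewrite -scalemxAl -scalemxAr AX.
exact/affine_comm/gen_mul_syn_factor.
Qed.

Lemma syn_factor_mul y y' j :
  syn_factor y j *m syn_factor y' j = (y j == y' j)%:R *: syn_factor y j.
Proof.
have affine_mul (a1 b1 a2 b2 : C) (X : 'M[C]_(2 ^ n)) : X *m X = 1%:M ->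
    (a1 *: 1%:M + b1 *: X) *m (a2 *: 1%:M + b2 *: X) =
    (a1 * a2 + b1 * b2) *: 1%:M + (a1 * b2 + b1 * a2) *: X.
  move=> XX; rewrite mulmxDl !mulmxDr -!scalemxAl -!scalemxAr !mul1mx !mulmx1 XX.
  rewrite !scalerA !scalerDl [(b1 * a2) *: X + _]addrC addrACA.
  by rewrite [b1 * a2]mulrC [a1 * a2]mulrC [a1 * b2]mulrC [b1 * b2]mulrC.
have factorE y'' : syn_factor y'' j = 2^-1 *: 1%:M + (2^-1 * (-1) ^+ y'' j) *: S j.
  by rewrite /syn_factor scalerDr scalerA.
rewrite !factorE affine_mul ?stab_gen_sq // scalerDr !scalerA.
by case: (y j); case: (y' j); congr (_ *: _ + _ *: _); rewrite /= ?expr1 ?expr0; field.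
Qed.

Lemma syn_proj_mul y y' :
  syn_proj S y *m syn_proj S y' = ([forall j, y j == y' j])%:R *: syn_proj S y.
Proof.
rewrite !syn_projE big_mulmx_commuting => [|j k]; last exact: syn_factor_comm.
under eq_bigr do rewrite syn_factor_mul.
by rewrite big_mulmx_scale prodr_nat_forall.
Qed.

Local Notation Pi0 := (syn_proj S (fun _ => false)).

Lemma gen_mul_syn_proj0 j : S j *m Pi0 = Pi0.
Proof.
apply: mulmx_big_absorb (mem_index_enum j) _ _ => [k|]; first exact: gen_mul_syn_factor.
by rewrite /syn_factor -scalemxAr mulmxDr mulmx1 expr0 scale1r stab_gen_sq addrC.
Qed.

Lemma syn_proj0_mul_gen j : Pi0 *m S j = Pi0.
Proof.
by rewrite -[RHS](gen_mul_syn_proj0 j) (mulmx_big_comm _ (gen_mul_syn_factor j _)).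
Qed.

Lemma stab_group_syn_proj0 M : stab_group S M -> M *m Pi0 = Pi0 /\ Pi0 *m M = Pi0.
Proof.
elim=> [|N [j ->]|N N' _ [N0 N0'] _ [N'0 N'0']|N _ [N0 N0'] N_unit].
- by rewrite mul1mx mulmx1.
- by rewrite gen_mul_syn_proj0 syn_proj0_mul_gen.
- by rewrite -mulmxA N'0 N0 mulmxA N0' N'0'.
- by split; [rewrite -{1}N0 mulKmx | rewrite -{1}N0' mulmxK].
Qed.

End StabilizerGenerators.

(** * Code states and recovery *)

(* Locked: unification would otherwise try to evaluate the enumeration hidden in
   [index_of_bits]. *)
HB.lock Definition syndrome (R : realType) n r (S : 'I_r -> 'M[R[i]]_(2 ^ n))
  (p : 'I_n -> pauli1) : 'I_(2 ^ r) := index_of_bits [ffun j => syndrome_bit S p j].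

Section Syndrome.
Variables (R : realType) (n r : nat) (S : 'I_r -> 'M[R[i]]_(2 ^ n)).
Hypothesis S_gen : stabilizer_generators S.
Local Notation C := (R[i]).
Local Notation PS := (pauli_string R).
Local Notation Pi0 := (syn_proj S (fun _ => false)).

Lemma bit_syndrome p (j : 'I_r) : bit (syndrome S p) j = syndrome_bit S p j.
Proof. by rewrite syndrome.unlock bit_index_of_bits ffunE. Qed.

Lemma Pi_mul x x' : Pi S x *m Pi S x' = (x == x')%:R *: Pi S x.
Proof. by rewrite /Pi syn_proj_mul // eq_bits. Qed.

Lemma pauli_string_mul_syn_proj0 p : PS p *m Pi0 = Pi S (syndrome S p) *m PS p.
Proof.
rewrite [LHS](pauli_string_mul_syn_proj S_gen) (eq_syn_proj S (y' := bit (syndrome S p))) //.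
by move=> j; rewrite bit_syndrome.
Qed.

Lemma syn_proj0_mul_pauli_string p : Pi0 *m PS p = PS p *m Pi S (syndrome S p).
Proof.
rewrite /Pi [RHS](pauli_string_mul_syn_proj S_gen) (eq_syn_proj S (y' := fun _ => false)) //.
by move=> j; rewrite bit_syndrome addbb.
Qed.

Variable rho : 'M[C]_(2 ^ n).
Hypothesis rho_code : Pi0 *m rho *m Pi0 = rho.

Lemma code_pauli_sandwich p q :
  PS p *m rho *m PS q = Pi S (syndrome S p) *m (PS p *m rho *m PS q) *m Pi S (syndrome S q).
Proof.
rewrite -{1}rho_code !mulmxA pauli_string_mul_syn_proj0 -!mulmxA.
by rewrite syn_proj0_mul_pauli_string.
Qed.

Lemma Pi_mul_code_pauli x p q :
  Pi S x *m (PS p *m rho *m PS q) = (x == syndrome S p)%:R *: (PS p *m rho *m PS q).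
Proof.
rewrite {1}code_pauli_sandwich mulmxA (mulmxA (Pi S x)) (Pi_mul x) -!scalemxAl.
case: eqVneq => [->|_]; last by rewrite !scale0r.
by rewrite !scale1r -code_pauli_sandwich.
Qed.

Lemma code_pauli_mul_Pi x p q :
  PS p *m rho *m PS q *m Pi S x = (syndrome S q == x)%:R *: (PS p *m rho *m PS q).
Proof.
rewrite {1}code_pauli_sandwich -mulmxA (Pi_mul (syndrome S q)) -scalemxAr.
case: (_ == _); last by rewrite !scale0r.
by rewrite !scale1r -code_pauli_sandwich.
Qed.

Lemma Pi_conj_code_pauli x p q :
  Pi S x *m (PS p *m rho *m PS q) *m Pi S x =
  ((x == syndrome S p) && (x == syndrome S q))%:R *: (PS p *m rho *m PS q).
Proof.
rewrite Pi_mul_code_pauli -scalemxAl code_pauli_mul_Pi scalerA -natrM mulnb.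
by rewrite [syndrome S q == x]eq_sym.
Qed.

Lemma trace_code_pauli p q : syndrome S p != syndrome S q -> \tr (PS p *m rho *m PS q) = 0.
Proof.
move=> spq; have PiX := Pi_mul_code_pauli (syndrome S p) p q.
rewrite eqxx scale1r in PiX.
by rewrite -PiX mxtrace_mulC code_pauli_mul_Pi eq_sym (negbTE spq) scale0r mxtrace0.
Qed.

Lemma stab_group_code M : stab_group S M -> M *m rho = rho /\ rho *m M = rho.
Proof.
move=> /(stab_group_syn_proj0 S_gen) [M0 M0']; rewrite -rho_code.
by split; [rewrite !mulmxA M0 | rewrite -!mulmxA M0'].
Qed.

Lemma same_syndrome_comm_gen p q j : syndrome S p = syndrome S q ->
  (PS p *m PS q) *m S j = S j *m (PS p *m PS q).
Proof.
move=> spq; have := bit_syndrome q j; rewrite -spq bit_syndrome => syn_pq.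
rewrite -mulmxA (pauli_string_mul_gen S_gen q) -scalemxAr (mulmxA (PS p)).
rewrite (pauli_string_mul_gen S_gen p) -scalemxAl scalerA syn_pq -signr_addb addbb.
by rewrite scale1r !mulmxA.
Qed.

Variable B : {set 'I_n}.
Hypothesis B_rec : recoverable S B.

Lemma pauli_supported_on_string p : supported_in B p -> pauli_supported_on B (PS p).
Proof.
move=> /forallP pB; exists 1, p; split; first by rewrite expr1n.
by split=> [k kB|]; [exact/eqP/(implyP (pB k)) | rewrite scale1r].
Qed.

Lemma pauli_supported_on_mul p q : supported_in B p -> supported_in B q ->
  pauli_supported_on B (PS p *m PS q).
Proof.
move=> /forallP pB /forallP qB.
exists (\prod_t pauli1_phase R (p t) (q t)), (fun t => pauli1_mul (p t) (q t)); split.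
  by rewrite -prodrXl; apply: big1 => t _; rewrite pauli1_phase4.
split=> [k kB|]; last exact: pauli_string_mul.
by rewrite (eqP (implyP (pB k) kB)) (eqP (implyP (qB k) kB)).
Qed.

(* Recoverability identifies [PS q *m PS p] with a stabilizer up to a phase. *)
Lemma recover_left p q : supported_in B p -> supported_in B q ->
  syndrome S p = syndrome S q -> exists k : C, PS p *m rho = k *: (PS q *m rho).
Proof.
move=> pB qB spq.
have [lam [M [_ [stabM qp]]]] := B_rec (pauli_supported_on_mul qB pB)
  (fun j => same_syndrome_comm_gen j (esym spq)).
have -> : PS p = PS q *m (PS q *m PS p) by rewrite mulmxA pauli_string_sq mul1mx.
by exists lam; rewrite qp -scalemxAr -scalemxAl -mulmxA (stab_group_code stabM).1.
Qed.

Lemma recover_right p q : supported_in B p -> supported_in B q ->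
  syndrome S p = syndrome S q -> exists k : C, rho *m PS p = k *: (rho *m PS q).
Proof.
move=> pB qB spq.
have [lam [M [_ [stabM pq]]]] := B_rec (pauli_supported_on_mul pB qB)
  (fun j => same_syndrome_comm_gen j spq).
have -> : PS p = PS p *m PS q *m PS q by rewrite -mulmxA pauli_string_sq mulmx1.
by exists lam; rewrite pq -scalemxAl -scalemxAr mulmxA (stab_group_code stabM).2.
Qed.

Lemma code_pauli_proportional p q p0 :
  supported_in B p -> supported_in B q -> supported_in B p0 ->
  syndrome S p = syndrome S p0 -> syndrome S q = syndrome S p0 ->
  exists k : C, PS p *m rho *m PS q = k *: (PS p0 *m rho *m PS p0).
Proof.
move=> pB qB p0B sp sq.
have [k1 ->] := recover_left pB p0B sp.
have [k2 rho_q] := recover_right qB p0B sq.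
exists (k1 * k2); by rewrite -scalemxAl -mulmxA rho_q -scalemxAr scalerA mulmxA.
Qed.

Variable F : 'M[C]_(2 ^ n) -> 'M[C]_(2 ^ n).
Variable c : {ffun 'I_n -> pauli1} -> {ffun 'I_n -> pauli1} -> C.
Hypothesis F_expansion : forall M, F M =
  \sum_(p : {ffun 'I_n -> pauli1} | supported_in B p)
    \sum_(q : {ffun 'I_n -> pauli1} | supported_in B q) c p q *: (PS p *m M *m PS q).

Lemma Pi_conj_superop x : Pi S x *m F rho *m Pi S x =
  \sum_(p : {ffun 'I_n -> pauli1} | supported_in B p)
    \sum_(q : {ffun 'I_n -> pauli1} | supported_in B q)
      (c p q * ((x == syndrome S p) && (x == syndrome S q))%:R) *: (PS p *m rho *m PS q).
Proof.
rewrite F_expansion mulmx_sumr mulmx_suml; apply: eq_bigr => p _.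
rewrite mulmx_sumr mulmx_suml; apply: eq_bigr => q _.
by rewrite -scalemxAr -scalemxAl Pi_conj_code_pauli scalerA.
Qed.

Lemma Pi_conj_superop_code x : exists (a : C) (p0 : {ffun 'I_n -> pauli1}),
  supported_in B p0 /\ Pi S x *m F rho *m Pi S x = a *: (PS p0 *m rho *m PS p0).
Proof.
case: (pickP (fun p0 : {ffun 'I_n -> pauli1} => supported_in B p0 && (syndrome S p0 == x))).
  move=> p0 /andP [p0B /eqP sp0].
  suff [a ->] : exists a : C, Pi S x *m F rho *m Pi S x = a *: (PS p0 *m rho *m PS p0).
    by exists a, p0.
  rewrite Pi_conj_superop; apply: sum_multiples => p pB; apply: sum_multiples => q qB.
  case: eqVneq => [sp|_]; last by exists 0; rewrite mulr0 !scale0r.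
  case: eqVneq => [sq|_]; last by exists 0; rewrite mulr0 !scale0r.
  have [k ->] := code_pauli_proportional pB qB p0B (etrans (esym sp) (esym sp0))
    (etrans (esym sq) (esym sp0)).
  by exists (c p q * 1 * k); rewrite scalerA.
move=> no_p0; exists 0, [ffun=> PI].
split; first by apply/forallP => k; rewrite ffunE eqxx implybT.
rewrite scale0r Pi_conj_superop; apply: big1 => p pB; apply: big1 => q _.
by have := no_p0 p; rewrite pB eq_sym /= => ->; rewrite mulr0 scale0r.
Qed.

Lemma sum_trace_Pi_conj_superop : \sum_x \tr (Pi S x *m F rho *m Pi S x) = \tr (F rho).
Proof.
under eq_bigr do rewrite Pi_conj_superop raddf_sum.
rewrite F_expansion raddf_sum exchange_big; apply: eq_bigr => p _.
under eq_bigr do rewrite raddf_sum.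
rewrite raddf_sum exchange_big; apply: eq_bigr => q _.
rewrite /=; under eq_bigr do rewrite /= mxtraceZ -mulrA.
rewrite -mulr_sumr mxtraceZ; congr (_ * _).
have [spq|spq] := eqVneq (syndrome S p) (syndrome S q); last first.
  by rewrite trace_code_pauli // big1 // => x _; rewrite mulr0.
rewrite (bigD1 (syndrome S p)) //= -spq eqxx mul1r big1 ?addr0 // => x /negbTE ->.
by rewrite mul0r.
Qed.

End Syndrome.

Unset Implicit Arguments.
Theorem lemma2p24 (R : realType) (n r : nat) (S : 'I_r -> 'M[R[i]]_(2 ^ n))
    (B : {set 'I_n}) (F : 'M[R[i]]_(2 ^ n) -> 'M[R[i]]_(2 ^ n))
    (rho : 'M[R[i]]_(2 ^ n)) :
  stabilizer_generators S ->
  recoverable S B ->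
  acts_as_id_outside B F ->
  density rho ->
  syn_proj S (fun _ => false) *m rho *m syn_proj S (fun _ => false) = rho ->
  exists (alpha : 'I_(2 ^ r) -> R[i]) (E : 'I_(2 ^ r) -> 'M[R[i]]_(2 ^ n)),
    (forall x, pauli_supported_on B (E x)) /\
    meas S (F rho) = \sum_(x < 2 ^ r) alpha x *: (delta_mx x x *t (E x *m rho *m E x)) /\
    ((forall M, \tr (F M) = \tr M) -> \sum_(x < 2 ^ r) alpha x = 1).
Proof.
move=> S_gen B_rec F_local [_ tr_rho] rho_code.
have [c F_expansion] := superop_pauli_expansion F_local.
have /fin_all_exists [u Pi_conj] : forall x : 'I_(2 ^ r),
    exists u : R[i] * {ffun 'I_n -> pauli1}, supported_in B u.2 /\
    Pi S x *m F rho *m Pi S x = u.1 *: (pauli_string R u.2 *m rho *m pauli_string R u.2).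
  move=> x; have [a [p0 ?]] := Pi_conj_superop_code S_gen rho_code B_rec F_expansion x.
  by exists (a, p0).
exists (fun x => (u x).1), (fun x => pauli_string R (u x).2); split; [|split].
- by move=> x; apply: pauli_supported_on_string; case: (Pi_conj x).
- by apply: eq_bigr => x _; rewrite (Pi_conj x).2 tensmxZr.
move=> trace_preserving; rewrite -tr_rho -trace_preserving.
rewrite -(sum_trace_Pi_conj_superop S_gen rho_code F_expansion).
by apply: eq_bigr => x _; rewrite (Pi_conj x).2 mxtraceZ mxtrace_pauli_conj tr_rho mulr1.
Qed.
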